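(* Let $X,Y$ be finite-dimensional normed spaces and let $f\colon X\to Y$ be continuously open at $x^*\in X$, with maximal rate $g(r)=\Gamma_{f(x^* )}\big(f(\overline{\mathbb{B}}_r(x^* ))\big)$. Define the generalized inverse $$g^{\leftarrow}(s):=\inf\{r>0:\ g(r)\ge s\}.$$ Then for any $s$ and any $S\subset X$ satisfying $\overline{\mathbb{B}}_s(f(x^* ))\subset f(S)$, one has $$\sup_{x\in S}\|x-x^*\|\ \ge\ g^{\leftarrow}(s).$$
   Context: $\mathbb{B}_r(x)$ and $\overline{\mathbb{B}}_r(x)$ denote the open and closed balls of radius $r$ centered at $x$. For metric spaces $X,Y$ and $x\in X$, $f$ is continuously open at $x$ if there is a continuous, positive definite (i.e. $g(0)=0$, $g(r)>0$ for $r>0$), monotonically increasing function $g$ with $\mathbb{B}_{g(r)}(f(x))\subseteq f(\mathbb{B}_r(x))$ for all sufficiently small $r>0$. For a normed space $Z$, $z^*\in Z$ and $K\subseteq Z$, the inradius of $K$ at $z^*$ is $\Gamma_{z^*}(K)=\sup\{r\ge0:\mathbb{B}_r(z^* )\subseteq K\}$. *)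

From HB Require Import structures.
From mathcomp Require Import all_boot all_order all_algebra.
From mathcomp Require Import all_classical all_reals all_analysis.
Set Implicit Arguments. Unset Strict Implicit. Unset Printing Implicit Defensive.
Import Order.TTheory GRing.Theory Num.Theory.
Import numFieldNormedType.Exports.
Local Open Scope classical_set_scope.
Local Open Scope ring_scope.

Section Defs.
Context {R : realType}.

Definition oball {V : normedModType R} (x : V) (r : R) : set V :=
  [set y | `|y - x| < r].

Definition cball {V : normedModType R} (x : V) (r : R) : set V :=
  [set y | `|y - x| <= r].

Definition finite_dim (V : normedModType R) : Prop :=
  exists (n : nat) (b : 'I_n -> V),
    forall v : V, exists c : 'I_n -> R, v = \sum_(i < n) c i *: b i.

Definition continuously_open {X Y : normedModType R} (f : X -> Y) (x : X) : Prop :=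
  exists g : R -> R,
    {within [set r : R | 0 <= r], continuous g} /\
    g 0 = 0 /\ (forall r, 0 < r -> 0 < g r) /\
    (forall r1 r2, 0 <= r1 -> r1 <= r2 -> g r1 <= g r2) /\
    exists delta : R, 0 < delta /\
      forall r, 0 < r -> r < delta -> oball (f x) (g r) `<=` f @` oball x r.

Definition inradius {Z : normedModType R} (z : Z) (K : set Z) : \bar R :=
  ereal_sup [set r%:E | r in [set r : R | 0 <= r /\ oball z r `<=` K]].

Definition max_rate {X Y : normedModType R} (f : X -> Y) (x : X) (r : R) : \bar R :=
  inradius (f x) (f @` cball x r).

Definition gen_inv (g : R -> \bar R) (s : R) : \bar R :=
  ereal_inf [set r%:E | r in [set r : R | 0 < r /\ (s%:E <= g r)%E]].

End Defs.

From HB Require Import structures.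
From mathcomp Require Import all_boot all_order all_algebra.
From mathcomp Require Import all_classical all_reals all_analysis.
Import Order.TTheory GRing.Theory Num.Theory.
Import numFieldNormedType.Exports.
Local Open Scope classical_set_scope.
Local Open Scope ring_scope.

(* If S lies in the closed ball of radius r around x, then f(cball x r)
   contains f(S), hence the ball of radius s around f x, so the maximal rate
   at r is at least s and g^<-(s) <= r.  Letting r decrease to the largest
   distance from x to S gives the bound. *)

Section GeneralizedInverseBound.
Context {R : realType}.

Lemma inradius_ge {Z : normedModType R} (z : Z) (K : set Z) (r : R) :
  0 <= r -> oball z r `<=` K -> (r%:E <= inradius z K)%E.
Proof. by move=> r0 rK; apply: ereal_sup_ubound; exists r. Qed.

Lemma gen_inv_le (g : R -> \bar R) (s r : R) :
  0 < r -> (s%:E <= g r)%E -> (gen_inv g s <= r%:E)%E.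
Proof. by move=> r0 sgr; apply: ereal_inf_lbound; exists r. Qed.

Lemma max_rate_ge {X Y : normedModType R} (f : X -> Y) (x : X) (S : set X)
    (r s : R) :
  0 <= s -> oball (f x) s `<=` f @` S -> S `<=` cball x r ->
  (s%:E <= max_rate f x r)%E.
Proof.
move=> s0 sS Sr; apply: inradius_ge => // y /sS [z Sz <-].
by exists z => //; apply: Sr.
Qed.

Lemma gen_inv_max_rate_le {X Y : normedModType R} (f : X -> Y) (x : X)
    (S : set X) (r s : R) :
  0 < r -> 0 <= s -> oball (f x) s `<=` f @` S -> S `<=` cball x r ->
  (gen_inv (max_rate f x) s <= r%:E)%E.
Proof. by move=> r0 s0 sS Sr; apply/gen_inv_le/(max_rate_ge f x S r s). Qed.

Lemma le_ereal_sup_dist {V : normedModType R} (x : V) (S : set V) (a : \bar R) :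
  S !=set0 ->
  (forall r, 0 < r -> S `<=` cball x r -> (a <= r%:E)%E) ->
  (a <= ereal_sup [set (`|y - x|)%:E | y in S])%E.
Proof.
move=> [y0 Sy0] aS; set E := [set (`|y - x|)%:E | y in S].
have distE y : S y -> ((`|y - x|)%:E <= ereal_sup E)%E.
  by move=> Sy; apply: ereal_sup_ubound; exists y.
case eM : (ereal_sup E) => [M| |]; last 2 first.
- exact: leey.
- by have := distE y0 Sy0; rewrite eM.
have M0 : 0 <= M by have := distE y0 Sy0; rewrite eM lee_fin; apply: le_trans.
apply/lee_addgt0Pr => e e0; apply: aS; first by rewrite ltr_wpDl.
move=> y Sy; rewrite /cball /=.
have := distE y Sy; rewrite eM lee_fin => yM.
by rewrite (le_trans yM) // lerDl ltW.
Qed.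

End GeneralizedInverseBound.

Theorem corollary2 (R : realType) (X Y : normedModType R) (f : X -> Y)
    (xs : X) (s : R) (S : set X) :
  finite_dim X -> finite_dim Y ->
  continuously_open f xs ->
  0 <= s ->
  cball (f xs) s `<=` f @` S ->
  (gen_inv (max_rate f xs) s <= ereal_sup [set (`|x - xs|)%:E | x in S])%E.
Proof.
move=> _ _ _ s0 sS.
have oball_sub : oball (f xs) s `<=` f @` S by move=> y /ltW; apply: sS.
have [x0 Sx0 _] : (f @` S) (f xs) by apply: sS; rewrite /cball /= subrr normr0.
apply: le_ereal_sup_dist; first by exists x0.
by move=> r r0; apply: gen_inv_max_rate_le.
Qed.
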